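(* Let $k\in\mathbb{N}$. Every tree $T$ with $k$ edges contains a vertex $v\in V(T)$ such that (1) there exists a partition of the forest $T-v$ into two vertex-disjoint subforests $F_1,F_2$ satisfying $k/2\le |F_1|\le \lfloor 2k/3\rfloor$, and (2) there exists a partition of the forest $T-v$ into three vertex-disjoint subforests $F_1',F_2',F_3'$, each with at most $\lceil k/2\rceil$ vertices, such that $F_3'$ is either empty or a tree.
   Context: $|F|$ denotes the number of vertices of a graph $F$. $T-v$ is the forest obtained from $T$ by deleting $v$. *)

(* Simple graphs as symmetric irreflexive relations on a finType. *)
From mathcomp Require Import all_boot.
Set Implicit Arguments. Unset Strict Implicit. Unset Printing Implicit Defensive.

Section Graphs.
Variable T : finType.

Definition simple_graph (e : rel T) : Prop := symmetric e /\ irreflexive e.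

Definition edges (e : rel T) : {set {set T}} :=
  [set [set x; y] | x in T, y in T & e x y].

Definition induced (e : rel T) (A : {set T}) : rel T :=
  [rel x y | [&& e x y, x \in A & y \in A]].

Definition connected_on (e : rel T) (A : {set T}) : Prop :=
  forall x y, x \in A -> y \in A -> connect (induced e A) x y.

(* the induced subgraph on A has no cycle (a cycle = closed path on at
   least 3 distinct vertices) *)
Definition acyclic_on (e : rel T) (A : {set T}) : Prop :=
  ~ exists (x : T) (p : seq T),
      [/\ path (induced e A) x p, uniq (x :: p), 2 <= size p
        & induced e A (last x p) x].

Definition tree_on (e : rel T) (A : {set T}) : Prop :=
  A != set0 /\ connected_on e A /\ acyclic_on e A.

Definition is_tree (e : rel T) : Prop := tree_on e [set: T].

(* no edge of T - v joins two different parts: the parts are subforests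
   whose union (vertices and edges) is the forest T - v *)
Definition respects_edges (e : rel T) (v : T) (part : T -> nat) : Prop :=
  forall x y, e x y -> x != v -> y != v -> part x = part y.

End Graphs.

From mathcomp Require Import all_boot zify.
Set Implicit Arguments. Unset Strict Implicit. Unset Printing Implicit Defensive.

(* A tree with k edges has k + 1 vertices and a centroid c: every component
   of T - c has at most (k + 1)/2, i.e. at most uphalf k, vertices.  The rest
   is bin packing of the component sizes, positive integers <= uphalf k
   summing to k.  A lightest family of components of total size >= k/2 has
   total size <= 2k/3: dropping any member B makes it lighter than k/2, so the
   complement of what remains, which contains B, is a competitor, whence
   2|Q| <= k + |B| for every member B.  For the three-way split, set a largest
   component aside and fill a first bin as much as possible with the others;
   what does not fit has size <= uphalf k, or a leftover component would be
   larger than the one set aside.  Unions of whole components respect the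
   edges of T - c, and a single component is a tree. *)

Section BalancedSubfamilies.

Variables (X : finType) (w : X -> nat) (k : nat) (P : {set X}).
Hypothesis sum_w : \sum_(B in P) w B = k.
Hypothesis w_range : forall B, B \in P -> 0 < w B <= uphalf k.

Local Notation wt Q := (\sum_(B in Q) w B).

Lemma wt_setD (Q : {set X}) : Q \subset P -> wt (P :\: Q) = k - wt Q.
Proof. by move=> QP; rewrite -sum_w [in RHS](big_setID Q) /= (setIidPr QP) addKn. Qed.

Lemma balanced_subfamily : k != 1 ->
  exists2 Q : {set X}, Q \subset P & k <= 2 * wt Q /\ 3 * wt Q <= 2 * k.
Proof.
move=> k_neq1.
pose heavy := [pred Q : {set X} | (Q \subset P) && (k <= 2 * wt Q)].
have heavyP : heavy P by rewrite /= subxx sum_w leq_pmull.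
have [Q /andP [QP kQ] Q_min] := arg_minnP (fun Q : {set X} => wt Q) heavyP.
exists Q => //; split => //.
have wt_le B : B \in Q -> 2 * wt Q <= k + w B.
  move=> BQ; have QBP : Q :\ B \subset P := subset_trans (subD1set Q B) QP.
  have wtQ : wt Q = w B + wt (Q :\ B) by rewrite (big_setD1 B BQ).
  have wB_gt0 := w_range (subsetP QP B BQ).
  have light : 2 * wt (Q :\ B) < k.
    rewrite ltnNge; apply/negP => heavyQB.
    by have := Q_min (Q :\ B); rewrite /= QBP heavyQB => /(_ isT); lia.
  have heavy_compl : heavy (P :\: (Q :\ B)) by rewrite /= subsetDl (wt_setD QBP); lia.
  by have := Q_min _ heavy_compl; rewrite (wt_setD QBP); lia.
have [Q_le1 | /card_gt1P [B [B' [BQ B'Q nBB']]]] := leqP #|Q| 1.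
  have : wt Q <= #|Q| * uphalf k.
    by rewrite -sum_nat_const leq_sum // => B /(subsetP QP) /w_range /andP [].
  nia.
have : w B + w B' <= wt Q.
  by rewrite (big_setD1 B BQ) leq_add2l (big_setD1 B') ?leq_addr // !inE eq_sym nBB'.
by have := wt_le B BQ; have := wt_le B' B'Q; lia.
Qed.

Lemma three_bins :
  exists Q1 Q2 Q3 : {set X},
    [/\ Q1 :|: Q2 :|: Q3 = P,
        [/\ [disjoint Q1 & Q2], [disjoint Q1 & Q3] & [disjoint Q2 & Q3]],
        [/\ wt Q1 <= uphalf k, wt Q2 <= uphalf k & wt Q3 <= uphalf k]
      & Q3 = set0 \/ exists B, Q3 = [set B]].
Proof.
have [-> | [B0 B0P]] := set_0Vmem P.
  exists set0, set0, set0; rewrite !setU0 !big_set0.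
  by split => //; [split; rewrite -setI_eq0 setI0 | left].
have [B1 B1P B1_max] := arg_maxnP w B0P.
pose R := P :\ B1.
have RP : R \subset P := subD1set P B1.
pose light := [pred Q : {set X} | (Q \subset R) && (wt Q <= uphalf k)].
have light0 : light set0 by rewrite /= sub0set big_set0.
have [Q /andP [QR Q_le] Q_max] := arg_maxnP (fun Q : {set X} => wt Q) light0.
exists Q, (R :\: Q), [set B1]; split.
- by rewrite -{1}(setIidPr QR) setID setUC setD1K.
- split; first by rewrite disjoint_sym disjoints_subset subsetDr.
    by rewrite disjoint_sym disjoints1; apply: contraTN B1P => /(subsetP QR); rewrite !inE eqxx.
  by rewrite disjoint_sym disjoints1 !inE eqxx andbF.
- split => //; last by rewrite big_set1; case/andP: (w_range B1P).
  rewrite leqNgt; apply/negP => over.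
  have [c cRQ] : exists c, c \in R :\: Q.
    by apply/set0Pn; apply: contraTneq over => ->; rewrite big_set0.
  have [cR cQ] := setDP cRQ.
  have cP := subsetP RP c cR.
  have over_c : uphalf k < w c + wt Q.
    rewrite ltnNge; apply/negP => fit.
    have := Q_max (c |: Q); rewrite /= subUset sub1set cR QR (big_setU1 _ cQ) /= fit.
    by move=> /(_ isT); have := w_range cP; lia.
  have := sum_w; rewrite (big_setD1 B1 B1P) -/R (big_setID Q) /= (setIidPr QR).
  by have : w c <= w B1 := B1_max c cP; lia.
- by right; exists B1.
Qed.

End BalancedSubfamilies.

Section SubfamilyCovers.

Variables (T : finType) (P : {set {set T}}).
Hypothesis trivP : trivIset P.

Lemma card_cover_sub (Q : {set {set T}}) :
  Q \subset P -> #|cover Q| = \sum_(B in Q) #|B|.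
Proof. by move=> QP; rewrite (eqP (trivIsetS QP trivP)). Qed.

Lemma mem_cover_sub (Q : {set {set T}}) x : Q \subset P -> x \in cover P ->
  (x \in cover Q) = (pblock P x \in Q).
Proof.
move=> QP xP; apply/bigcupP/idP => [[B BQ xB] | xQ].
  by rewrite (def_pblock trivP (subsetP QP _ BQ) xB).
by exists (pblock P x); rewrite ?mem_pblock.
Qed.

Lemma disjoint_cover_sub (Q1 Q2 : {set {set T}}) :
  Q1 \subset P -> Q2 \subset P -> [disjoint Q1 & Q2] ->
  [disjoint cover Q1 & cover Q2].
Proof.
move=> Q1P Q2P; rewrite -!setI_eq0 => /eqP Q12; apply/eqP/setP => x; rewrite !inE.
apply/andP => -[/bigcupP [B1 B1Q xB1] /bigcupP [B2 B2Q xB2]].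
have : B1 \in Q1 :&: Q2.
  by rewrite inE B1Q -(def_pblock trivP (subsetP Q1P _ B1Q) xB1)
             (def_pblock trivP (subsetP Q2P _ B2Q) xB2).
by rewrite Q12 inE.
Qed.

End SubfamilyCovers.

Section Trees.

Variables (T : finType) (e : rel T).
Hypotheses (e_sym : symmetric e) (e_irr : irreflexive e).

Implicit Types (A D : {set T}) (p : seq T).

Local Notation conn D := (connect (induced e D)).

Lemma induced_sym D : symmetric (induced e D).
Proof. by move=> x y; rewrite /induced /= e_sym [(x \in D) && _]andbC. Qed.

Lemma connect_induced_sym D : connect_sym (induced e D).
Proof. exact/sym_connect_sym/induced_sym. Qed.

Lemma induced_mem D x y : induced e D x y -> x \in D /\ y \in D.
Proof. by case/and3P. Qed.

Lemma induced_neq D x y : induced e D x y -> x != y.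
Proof. by case/and3P => exy _ _; apply: contraTneq exy => ->; rewrite e_irr. Qed.

Lemma sub_induced D1 D2 : D1 \subset D2 -> subrel (induced e D1) (induced e D2).
Proof. by move=> /subsetP D12 x y /and3P [exy /D12 xD /D12 yD]; rewrite /induced /= exy xD yD. Qed.

Lemma connect_sub_induced D1 D2 x y : D1 \subset D2 -> conn D1 x y -> conn D2 x y.
Proof. by move=> D12; apply: connect_sub => a b /(sub_induced D12)/connect1. Qed.

Lemma path_induced_mem D x p : path (induced e D) x p -> {subset p <= D}.
Proof.
elim: p x => [|y p IH] x //= /andP [/induced_mem [_ yD] /IH pD] z.
by rewrite inE => /predU1P [-> | /pD].
Qed.

Lemma connect_induced_mem D x y : conn D x y -> x != y -> y \in D.
Proof.
case/connectP => p pth ->; case/lastP: p pth => [|p z] pth; first by rewrite eqxx.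
by rewrite last_rcons => _; apply: (path_induced_mem pth); rewrite mem_rcons mem_head.
Qed.

Lemma mem_connect_induced D x y : x \in D -> conn D x y -> y \in D.
Proof. by move=> xD Cxy; have [<- | /(connect_induced_mem Cxy)] := eqVneq x y. Qed.

Lemma path_induced_restrict D D' x p : path (induced e D) x p ->
  x \in D' -> {subset p <= D'} -> path (induced e D') x p.
Proof.
elim: p x => [|y p IH] x //= /andP [/and3P [exy _ _] pth] xD' pD'.
have yD' : y \in D' by apply: pD'; rewrite mem_head.
rewrite /induced /= exy xD' yD' IH // => z zp.
by apply: pD'; rewrite inE zp orbT.
Qed.

Lemma connect_induced_closed D D' x y :
  (forall z, conn D x z -> z \in D') -> conn D x y -> conn D' x y.
Proof.
move=> closed /connectP [p pth ->]; apply/connectP; exists p => //.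
apply: (path_induced_restrict pth); first exact/closed/connect0.
by move=> z zp; apply/closed/(path_connect pth); rewrite inE zp orbT.
Qed.

Lemma connect_induced_first_step D u z : conn D u z -> u != z ->
  exists2 w, induced e D u w & conn (D :\ u) w z.
Proof.
case/connectP => p pth ->; case/shortenP: pth => p' pth uniq_p _.
case: p' pth uniq_p => [|w p'] /=; first by rewrite eqxx.
move=> /andP [Ruw pth] uniq_p _; exists w => //; apply/connectP; exists p' => //.
move: uniq_p; rewrite inE negb_or => /andP [/andP [uw up'] _].
apply: (path_induced_restrict pth); first by rewrite !inE eq_sym uw (induced_mem Ruw).2.
move=> y yp'; rewrite !inE (path_induced_mem pth yp') andbT.
by apply: contraNneq up' => <-.
Qed.

Lemma acyclic_on_sub A A' : A' \subset A -> acyclic_on e A -> acyclic_on e A'.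
Proof.
move=> A'A acyclicA [x [p [pth uniq_p size_p closing]]]; apply: acyclicA.
exists x, p; split => //; last exact: sub_induced closing.
by apply: sub_path pth; apply: sub_induced.
Qed.

Lemma acyclic_neighbours_disconnected A u v w : acyclic_on e A ->
  induced e A u w -> induced e A u v -> w != v -> ~~ conn (A :\ u) w v.
Proof.
move=> acyclicA Ruw Ruv wv; apply/negP => /connectP [p pth v_last].
move: Ruv wv; rewrite v_last; case/shortenP: pth => p' pth uniq_p _ Ruv wv.
apply: acyclicA; exists u, (w :: p'); split.
- by rewrite /= Ruw; apply: sub_path pth; apply/sub_induced/subD1set.
- rewrite cons_uniq uniq_p andbT inE negb_or (induced_neq Ruw) /=.
  by apply/negP => /(path_induced_mem pth); rewrite !inE eqxx.
- by case: p' {pth uniq_p Ruv} wv => [|? ?] /=; rewrite ?eqxx.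
- by rewrite /= induced_sym.
Qed.

Definition branch A v u := [set z | conn (A :\ v) u z].

Lemma branch_root A v u : u \in branch A v u.
Proof. by rewrite inE connect0. Qed.

Lemma branch_notin A v u : u != v -> v \notin branch A v u.
Proof.
by move=> uv; rewrite inE; apply/negP => /connect_induced_mem/(_ uv); rewrite !inE eqxx.
Qed.

Lemma branch_sub A v u : u \in A -> branch A v u \subset A.
Proof.
move=> uA; apply/subsetP => z; rewrite inE => Cuz.
by have [<- // | /(connect_induced_mem Cuz)/setD1P []] := eqVneq u z.
Qed.

Lemma sub_branch A v u z : conn (A :\ v) u z -> branch A v z \subset branch A v u.
Proof. by move=> Cuz; apply/subsetP => y; rewrite !inE; apply: connect_trans. Qed.

Lemma branch_neighbour A c z : connected_on e A -> c \in A -> z \in A :\ c ->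
  exists2 w, induced e A c w & branch A c z \subset branch A c w.
Proof.
move=> connA cA /setD1P [zc zA]; rewrite eq_sym in zc.
have [w Rcw Cwz] := connect_induced_first_step (connA c z cA zA) zc.
by exists w => //; apply: sub_branch.
Qed.

Lemma branch_proper A u v w : acyclic_on e A ->
  induced e A v u -> induced e A u w -> w != v -> branch A u w \proper branch A v u.
Proof.
move=> acyclicA Rvu Ruw wv; have [uA wA] := induced_mem Ruw.
have Ruv : induced e A u v by rewrite induced_sym.
have not_Cwv := acyclic_neighbours_disconnected acyclicA Ruw Ruv wv.
apply/properP; split; last first.
  by exists u; [exact: branch_root | apply: branch_notin; rewrite eq_sym (induced_neq Ruw)].
apply/subsetP => z; rewrite !inE => Cwz.
apply: (@connect_trans _ _ w); first apply: connect1.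
  by case/and3P: Ruw => euw _ _; rewrite /induced /= euw !inE uA wA wv eq_sym (induced_neq Rvu).
apply: connect_induced_closed Cwz => y Cwy.
rewrite !inE (subsetP (branch_sub u wA)) ?inE // andbT.
by apply: contraNneq not_Cwv => <-.
Qed.

Lemma branch_disjoint A u v : acyclic_on e A -> induced e A u v ->
  [disjoint branch A u v & branch A v u].
Proof.
move=> acyclicA Ruv; rewrite -setI_eq0; apply/set0Pn => -[z /setIP [zBuv zBvu]].
have uBuv : u \notin branch A u v by apply: branch_notin; rewrite eq_sym (induced_neq Ruv).
have uz : u != z by apply: contraTneq zBuv => <-.
rewrite inE in zBvu; have [w Ruw Cwz] := connect_induced_first_step zBvu uz.
have [_ /setD1P [wv _]] := induced_mem Ruw.
have Cwv : conn (A :\ u) w v.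
  apply: connect_trans (connect_sub_induced (setSD _ (subD1set A v)) Cwz) _.
  by rewrite connect_induced_sym; rewrite inE in zBuv.
have Ruw' := sub_induced (subD1set A v) Ruw.
by have := acyclic_neighbours_disconnected acyclicA Ruw' Ruv wv; rewrite Cwv.
Qed.

Lemma tree_leaf A : tree_on e A -> 1 < #|A| ->
  exists u v, [/\ induced e A u v, forall w, induced e A u w -> w = v
                & tree_on e (A :\ u)].
Proof.
case=> _ [connA acyclicA] /card_gt1P [a [b [aA bA ab]]].
have [a' Raa' _] := connect_induced_first_step (connA a b aA bA) ab.
pose arc := [pred p : T * T | induced e A p.1 p.2].
have arc0 : arc (a, a') by [].
have [[v u] /= Rvu minP] := arg_minnP (fun p : T * T => #|branch A p.1 p.2|) arc0.
(* Any second neighbour w of u would give the smaller branch [branch A u w]. *)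
have v_uniq w : induced e A u w -> w = v.
  move=> Ruw; apply/eqP; apply: contraT => wv.
  have := minP (u, w) Ruw; rewrite leqNgt.
  by rewrite (proper_card (branch_proper acyclicA Rvu Ruw wv)).
have Ruv : induced e A u v by rewrite induced_sym.
have [uA vA] := induced_mem Ruv.
have connv x : x \in A :\ u -> conn (A :\ u) v x.
  case/setD1P => xu xA; rewrite eq_sym in xu.
  by have [w /v_uniq ->] := connect_induced_first_step (connA u x uA xA) xu.
exists u, v; split => //; split; last split.
- by apply/set0Pn; exists v; rewrite !inE eq_sym (induced_neq Ruv) vA.
- move=> x y /connv Cvx /connv Cvy.
  by apply: connect_trans Cvy; rewrite connect_induced_sym.
- exact: acyclic_on_sub (subD1set A u) acyclicA.
Qed.

Lemma edges_induced_setT : edges (induced e [set: T]) = edges e.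
Proof.
apply/setP => E; apply/imset2P/imset2P => -[x y _].
  by rewrite !inE /induced /= !in_setT !andbT => exy ->; exists x y; rewrite ?inE.
by rewrite !inE => exy ->; exists x y; rewrite ?inE /induced /= ?in_setT ?andbT.
Qed.

Lemma card_edges_leaf A u v : induced e A u v -> (forall w, induced e A u w -> w = v) ->
  #|edges (induced e A)| = #|edges (induced e (A :\ u))|.+1.
Proof.
move=> Ruv v_uniq.
have -> : edges (induced e A) = [set u; v] |: edges (induced e (A :\ u)).
  apply/setP => E; rewrite in_setU1.
  apply/imset2P/orP => [[x y _] | [/eqP -> | /imset2P [x y _]]].
  - rewrite !inE /= => /[dup] Rxy /and3P [exy xA yA] ->.
    case: (eqVneq x u) Rxy => [-> Ruy | xu _]; first by left; rewrite (v_uniq y Ruy).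
    case: (eqVneq y u) exy => [-> exu | yu exy].
      by left; rewrite setUC (v_uniq x) // /induced /= e_sym exu xA (induced_mem Ruv).1.
    by right; apply/imset2P; exists x y; rewrite ?inE // /induced /= exy !inE xu yu xA yA.
  - by exists u v; rewrite ?inE.
  - rewrite !inE /= => /and3P [exy /setD1P [_ xA] /setD1P [_ yA]] ->.
    by exists x y; rewrite ?inE // /induced /= exy xA yA.
rewrite cardsU1; suff -> : [set u; v] \notin edges (induced e (A :\ u)) by [].
apply/imset2P => -[x y _]; rewrite !inE /= => /and3P [_ /setD1P [xu _] /setD1P [yu _]].
move/setP/(_ u); rewrite !inE eqxx /= => /esym/orP [/eqP ux | /eqP uy].
  by rewrite ux eqxx in xu.
by rewrite uy eqxx in yu.
Qed.

Lemma card_tree_edges A : tree_on e A -> #|A| = #|edges (induced e A)|.+1.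
Proof.
move: {2}#|A| (leqnn #|A|) => n; elim: n A => [|n IH] A An treeA; have A_neq0 := proj1 treeA.
  by move: An; rewrite leqn0 cards_eq0 (negbTE A_neq0).
have [A_gt1 | A_le1] := ltnP 1 #|A|.
  have [u [v [Ruv v_uniq treeAu]]] := tree_leaf treeA A_gt1.
  have [uA _] := induced_mem Ruv.
  move: An; rewrite (cardsD1 u) uA add1n ltnS => An.
  by rewrite (card_edges_leaf Ruv v_uniq) -(IH _ An treeAu).
have /cards1P [a ->] : #|A| == 1 by rewrite eqn_leq A_le1 card_gt0 A_neq0.
rewrite cards1; congr _.+1; apply/esym/eqP; rewrite cards_eq0; apply/eqP/setP => E.
rewrite inE; apply/imset2P => -[x y _]; rewrite !inE /= => /and3P [exy].
rewrite !inE => /eqP xa /eqP ya.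
by rewrite xa ya e_irr in exy.
Qed.

Lemma tree_centroid A : tree_on e A ->
  exists2 c, c \in A & forall z, z \in A :\ c -> 2 * #|branch A c z| <= #|A|.
Proof.
case=> /set0Pn [c0 c0A] [connA acyclicA].
pose heavy := [pred p : T * T | induced e A p.1 p.2 && (#|A| < 2 * #|branch A p.1 p.2|)].
case: (pickP heavy) => [p0 heavy_p0 | light]; last first.
  exists c0 => // z /(branch_neighbour connA c0A) [w Rc0w /subset_leq_card zw].
  have := light (c0, w); rewrite /= Rc0w /= => /negbT; rewrite -leqNgt; lia.
have [[v u] /= /andP [Rvu heavy_vu] minP] :=
  arg_minnP (fun p : T * T => #|branch A p.1 p.2|) heavy_p0.
(* Branches at u other than the one containing v are proper subsets of
   [branch A v u], hence light by minimality; the one containing v is disjoint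
   from the heavy [branch A v u]. *)
have [vA uA] := induced_mem Rvu.
exists u => // z /(branch_neighbour connA uA) [w Ruw /subset_leq_card zw].
apply: leq_trans (leq_mul (leqnn 2) zw) _.
have [wv | wv] := eqVneq w v.
  rewrite wv in Ruw *.
  have : #|branch A u v :|: branch A v u| <= #|A|.
    by apply/subset_leq_card; rewrite subUset !branch_sub.
  by rewrite cardsU (disjoint_setI0 (branch_disjoint acyclicA Ruw)) cards0 subn0; lia.
rewrite leqNgt; apply/negP => heavy_uw.
have := minP (u, w); rewrite /= Ruw heavy_uw => /(_ isT).
by rewrite leqNgt (proper_card (branch_proper acyclicA Rvu Ruw wv)).
Qed.

Lemma connect_induced_equivalence D : {in D & &, equivalence_rel (conn D)}.
Proof.
move=> x y z _ _ _; split => [|Cxy]; first exact: connect0.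
apply/idP/idP => [Cxz | Cyz]; last exact: connect_trans Cxy Cyz.
by apply: connect_trans Cxz; rewrite connect_induced_sym.
Qed.

Definition components D := equivalence_partition (conn D) D.

Lemma components_partition D : partition (components D) D.
Proof. exact/equivalence_partitionP/connect_induced_equivalence. Qed.

Lemma pblock_components D x y : induced e D x y ->
  pblock (components D) x = pblock (components D) y.
Proof.
move=> Rxy; have [xD yD] := induced_mem Rxy.
apply/esym/same_pblock; first exact: partition_trivIset (components_partition D).
by rewrite pblock_equivalence_partition //; [exact: connect1 | exact: connect_induced_equivalence].
Qed.

Lemma tree_components D B : acyclic_on e D -> B \in components D -> tree_on e B.
Proof.
move=> acyclicD /imsetP [x xD ->]; split; last split.
- by apply/set0Pn; exists x; rewrite inE xD connect0.
- move=> y z; rewrite !inE => /andP [yD Cxy] /andP [_ Cxz].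
  have Cyz : conn D y z by apply: connect_trans Cxz; rewrite connect_induced_sym.
  apply: connect_induced_closed Cyz => t Cyt.
  by rewrite inE (mem_connect_induced yD Cyt) (connect_trans Cxy Cyt).
- by apply: acyclic_on_sub acyclicD; apply/subsetP => y; rewrite inE => /andP [].
Qed.

Section SplitAtVertex.

Variables (k : nat) (v : T).
Hypothesis acyclicT : acyclic_on e [set: T].
Hypothesis cardT : #|[set: T]| = k.+1.
Hypothesis v_centroid :
  forall z, z \in [set: T] :\ v -> 2 * #|branch [set: T] v z| <= k.+1.

Let D := [set: T] :\ v.
Let P := components D.
Let partP : partition P D := components_partition D.
Let trivP : trivIset P := partition_trivIset partP.

Lemma sum_card_components : \sum_(B in P) #|B| = k.
Proof.
rewrite (eqP trivP) (cover_partition partP).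
by move: cardT; rewrite (cardsD1 v) in_setT add1n => -[].
Qed.

Lemma card_components B : B \in P -> 0 < #|B| <= uphalf k.
Proof.
move=> BP; rewrite card_gt0 (partition_neq0 partP BP) /=.
have [x xD ->] := imsetP BP.
have : #|[set y in D | conn D x y]| <= #|branch [set: T] v x|.
  by apply/subset_leq_card/subsetP => y; rewrite !inE => /andP [].
by have := v_centroid xD; lia.
Qed.

Lemma cover_components_edge (Q : {set {set T}}) x y : Q \subset P ->
  e x y -> x != v -> y != v -> (x \in cover Q) = (y \in cover Q).
Proof.
move=> QP exy xv yv; have [xD yD] : x \in D /\ y \in D by rewrite !inE xv yv.
rewrite !(mem_cover_sub trivP QP) ?(cover_partition partP) //.
by rewrite (@pblock_components D x y) // /induced /= exy xD yD.
Qed.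

Lemma split_two_forests : k != 1 ->
  exists F1 F2 : {set T},
    [/\ F1 :|: F2 = [set: T] :\ v, [disjoint F1 & F2],
        respects_edges e v (fun x => (x \in F1) : nat),
        k <= 2 * #|F1| & #|F1| <= (2 * k) %/ 3].
Proof.
move=> k_neq1.
have [Q QP [kQ Q23]] := balanced_subfamily sum_card_components card_components k_neq1.
exists (cover Q), (cover (P :\: Q)); rewrite (card_cover_sub trivP QP); split => //.
- by rewrite /cover -bigcup_setU -{1}(setIidPr QP) setID; apply: cover_partition.
- apply: (disjoint_cover_sub trivP QP); first exact: subsetDl.
  by rewrite disjoint_sym disjoints_subset subsetDr.
- by move=> x y exy xv yv; rewrite (cover_components_edge QP exy xv yv).
- by rewrite leq_divRL // mulnC.
Qed.

Lemma split_three_forests :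
  exists F1 F2 F3 : {set T},
    [/\ F1 :|: F2 :|: F3 = [set: T] :\ v,
        [/\ [disjoint F1 & F2], [disjoint F1 & F3] & [disjoint F2 & F3]],
        respects_edges e v
          (fun x => if x \in F1 then 0 else if x \in F2 then 1 else 2),
        [/\ #|F1| <= uphalf k, #|F2| <= uphalf k & #|F3| <= uphalf k]
      & F3 = set0 \/ tree_on e F3].
Proof.
have [Q1 [Q2 [Q3 [defP [d12 d13 d23] [s1 s2 s3] Q3_small]]]] :=
  three_bins sum_card_components card_components.
have [Q1P Q2P Q3P] : [/\ Q1 \subset P, Q2 \subset P & Q3 \subset P].
  by rewrite -defP; split; apply/subsetP => B BQ; rewrite !inE BQ ?orbT.
exists (cover Q1), (cover Q2), (cover Q3); rewrite !(card_cover_sub trivP) //.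
split => //.
- by rewrite /cover -!bigcup_setU defP; apply: cover_partition.
- by split; apply: (disjoint_cover_sub trivP).
- by move=> x y exy xv yv; rewrite !(cover_components_edge _ exy xv yv).
case: Q3_small => [-> | [B defQ3]]; [left | right]; first by rewrite /cover big_set0.
rewrite defQ3 cover1; apply: (tree_components (acyclic_on_sub (subsetT D) acyclicT)).
by apply: (subsetP Q3P); rewrite defQ3 set11.
Qed.

End SplitAtVertex.

End Trees.

Theorem corollary3p4 (k : nat) (T : finType) (e : rel T) :
  k != 1 ->
  simple_graph e -> is_tree e -> #|edges e| = k ->
  exists v : T,
    (exists F1 F2 : {set T},
        [/\ F1 :|: F2 = [set: T] :\ v, [disjoint F1 & F2],
            respects_edges e v (fun x => (x \in F1) : nat),
            k <= 2 * #|F1| & #|F1| <= (2 * k) %/ 3]) /\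
    (exists F1 F2 F3 : {set T},
        [/\ F1 :|: F2 :|: F3 = [set: T] :\ v,
            [/\ [disjoint F1 & F2], [disjoint F1 & F3] & [disjoint F2 & F3]],
            respects_edges e v
              (fun x => if x \in F1 then 0 else if x \in F2 then 1 else 2),
            [/\ #|F1| <= uphalf k, #|F2| <= uphalf k & #|F3| <= uphalf k]
          & F3 = set0 \/ tree_on e F3]).
Proof.
move=> k_neq1 [e_sym e_irr] treeT card_edges.
have cardT : #|[set: T]| = k.+1.
  by rewrite (card_tree_edges e_sym e_irr treeT) edges_induced_setT card_edges.
have [_ [_ acyclicT]] := treeT.
have [c _ c_centroid] := tree_centroid e_sym e_irr treeT.
rewrite cardT in c_centroid.
exists c; split; first exact: split_two_forests.
exact: split_three_forests.
Qed.
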